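(* Let $W\subset\mathbb{P}^4$ be any cubic hypersurface whose singular locus contains a line $\ell$. Then $\mathbb{P}^4\setminus W$ contains a cylinder, i.e. a Zariski open subset isomorphic to $Z\times\mathbb{A}^1$ for some variety $Z$.
   Context: Over $\mathbb{C}$. *)

From mathcomp Require Import all_boot all_algebra.
From mathcomp Require Import reals complex.
From mathcomp Require Import mpoly.
Set Implicit Arguments. Unset Strict Implicit. Unset Printing Implicit Defensive.
Import GRing.Theory.
Local Open Scope ring_scope.

(* Points of K^n are functions 'I_n -> K; a point of P^4 is represented by a
   nonzero vector of K^5 (all predicates/maps below are compatible with scaling). *)
Section ClassicalAG.
Variable K : fieldType.

Definition vec (n : nat) := 'I_n -> K.

Definition lin_comb (s t : K) (a b : vec 5) : vec 5 := fun i => s * a i + t * b i.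

Definition lin_indep2 (a b : vec 5) : Prop :=
  forall s t : K, (forall i, lin_comb s t a b i = 0) -> s = 0 /\ t = 0.

Definition cubic_form (F : {mpoly K[5]}) : Prop := F != 0 /\ F \is 3.-homog.

Definition sing_point (F : {mpoly K[5]}) (x : vec 5) : Prop :=
  F.@[x] = 0 /\ forall i : 'I_5, (mderiv i F).@[x] = 0.

Definition line_in_sing (F : {mpoly K[5]}) (a b : vec 5) : Prop :=
  lin_indep2 a b /\ forall s t : K, sing_point F (lin_comb s t a b).

(* Every Zariski open subset of P^4 \ V(F) is of this form. *)
Definition homog_family (S : seq {mpoly K[5]}) : Prop :=
  forall G, G \in S -> exists d : nat, G \is d.-homog.

Definition open_in_compl (F : {mpoly K[5]}) (S : seq {mpoly K[5]}) (x : vec 5) : Prop :=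
  F.@[x] != 0 /\ exists2 G, G \in S & G.@[x] != 0.

Definition loc_closed (N : nat) (A B : seq {mpoly K[N]}) (z : vec N) : Prop :=
  (forall f, f \in A -> f.@[z] = 0) /\ exists2 g, g \in B & g.@[z] != 0.

Definition irreducible_set (N : nat) (Z : vec N -> Prop) : Prop :=
  (exists z, Z z) /\
  forall p q : {mpoly K[N]}, (forall z, Z z -> (p * q).@[z] = 0) ->
    (forall z, Z z -> p.@[z] = 0) \/ (forall z, Z z -> q.@[z] = 0).

(* The product Z x A^1, as a subset of K^(N+1) (last coordinate = A^1). *)
Definition first_coords (N : nat) (y : vec N.+1) : vec N :=
  fun i => y (widen_ord (leqnSn N) i).

Definition cyl_set (N : nat) (Z : vec N -> Prop) (y : vec N.+1) : Prop :=
  Z (first_coords y).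

Definition regular_fun (M : nat) (X : vec M -> Prop) (f : vec M -> K) : Prop :=
  forall y, X y -> exists p q : {mpoly K[M]}, q.@[y] != 0 /\
    forall y', X y' -> q.@[y'] != 0 -> f y' = p.@[y'] / q.@[y'].

Definition proj_regular_fun (U : vec 5 -> Prop) (f : vec 5 -> K) : Prop :=
  forall x, U x -> exists (d : nat) (G H : {mpoly K[5]}),
    [/\ G \is d.-homog, H \is d.-homog, H.@[x] != 0 &
    forall x', U x' -> H.@[x'] != 0 -> f x' = G.@[x'] / H.@[x']].

Definition regular_to_proj (M : nat) (X : vec M -> Prop) (psi : vec M -> vec 5) : Prop :=
  forall y, X y -> exists (g : 'I_5 -> {mpoly K[M]}) (h : {mpoly K[M]}),
    [/\ h.@[y] != 0, (exists i, (g i).@[y] != 0) &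
    forall y', X y' -> h.@[y'] != 0 ->
      exists2 c : K, c != 0 & forall i, psi y' i = c * (g i).@[y']].

Definition proj_iso (U : vec 5 -> Prop) (M : nat) (Y : vec M -> Prop) : Prop :=
  exists (phi : vec 5 -> vec M) (psi : vec M -> vec 5),
    [/\ (forall x, U x -> Y (phi x)) /\ (forall y, Y y -> U (psi y)),
        forall x, U x -> (exists2 c : K, c != 0 & forall i, psi (phi x) i = c * x i),
        forall y, Y y -> phi (psi y) = y,
        forall j : 'I_M, proj_regular_fun U (fun x => phi x j) &
        regular_to_proj Y psi].

Definition contains_cylinder (F : {mpoly K[5]}) : Prop :=
  exists (S : seq {mpoly K[5]}) (N : nat) (A B : seq {mpoly K[N]}),
    [/\ homog_family S, irreducible_set (loc_closed A B) &
        proj_iso (open_in_compl F S) (cyl_set (loc_closed A B))].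

End ClassicalAG.

(* Write points of K^5 as x = s a + t b + w, with w in the complement
   {w_i0 = w_j0 = 0} of the line l = <a, b>.  Since the cubic F is singular
   along l, its Taylor expansion at the points of l gives
     F(s a + t b + w) = s d_aF(w) + t d_bF(w) + F(w),
   which is affine in (s, t).  If d_aF is not identically zero then, on
   {F != 0, d_aF != 0}, the point [x] is determined by w and t up to scaling;
   normalising by d_aF / F, [x] |-> (w, t) is an isomorphism onto
   {w : d_aF(w) != 0} x A^1, and s is recovered from the affine equation.
   The case of d_bF is symmetric.  If d_aF = d_bF = 0, then F is a cone with
   vertex l, and normalising a coordinate w_k of w to 1 identifies
   {F != 0, w_k != 0} with {F != 0, t = 0, w_k = 1} x A^1 through
   (z, tau) |-> z + tau b.  Both bases are open in affine subspaces, hence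
   irreducible. *)

From mathcomp Require Import all_boot all_algebra.
From mathcomp Require Import reals complex.
From mathcomp Require Import mpoly.
From mathcomp Require Import zify ring.
From Stdlib Require Import Classical FunctionalExtensionality.
Set Implicit Arguments. Unset Strict Implicit. Unset Printing Implicit Defensive.
Import GRing.Theory Num.Theory.
Local Open Scope ring_scope.

Section PolyFacts.
Variable K : numFieldType.

Lemma poly_eq0_vanish_off0 (P : {poly K}) :
  (forall mu, mu != 0 -> P.[mu] = 0) -> P = 0.
Proof.
move=> hP; apply/eqP; apply: contraT => nzP.
have := max_poly_roots nzP (rs := [seq i.+1%:R : K | i <- iota 0 (size P)]).
rewrite size_map size_iota ltnn; apply.
  by apply/allP => _ /mapP [i _ ->]; apply/eqP/hP; rewrite pnatr_eq0.
by rewrite map_inj_uniq ?iota_uniq // => i j /eqP; rewrite eqr_nat eqSS => /eqP.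
Qed.

Lemma size_prod_linear_exp_leq (I : finType) (q : I -> {poly K}) (k : I -> nat) :
  (forall i, (size (q i) <= 2)%N) -> (size (\prod_i q i ^+ k i)%R <= (\sum_i k i).+1)%N.
Proof.
move=> hq; elim/big_rec2: _ => [|i s P _ IH]; first by rewrite size_poly1.
apply: leq_trans (size_polyMleq _ _) _.
have hqk := size_poly_exp_leq (q i) (k i).
have : ((size (q i)).-1 * k i <= 1 * k i)%N.
  by rewrite leq_mul2r -subn1 leq_subLR hq orbT.
lia.
Qed.
End PolyFacts.

Section MpolyFacts.
Variables (K : numFieldType) (n : nat).
Implicit Types (p q : {mpoly K[n]}) (x v w : 'I_n -> K).

Lemma mpoly_alg_ind (P : {mpoly K[n]} -> Prop) :
  (forall c, P c%:MP) -> (forall i, P 'X_i) ->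
  (forall p q, P p -> P q -> P (p + q)) ->
  (forall p q, P p -> P q -> P (p * q)) -> forall p, P p.
Proof.
move=> hC hX hD hM p; rewrite (mpolyE p).
apply: (big_ind P) => //; first by rewrite -mpolyC0.
move=> m _; rewrite -mul_mpolyC; apply: (hM); first exact: hC.
rewrite mpolyXE_id; apply: (big_ind P) => //; first by rewrite -mpolyC1.
move=> i _; elim: (m i) => [|k IHk]; first by rewrite expr0 -mpolyC1.
by rewrite exprS; apply: (hM).
Qed.

Lemma meval_mderivX v i j : (mderiv i 'X_j : {mpoly K[n]}).@[v] = (i == j)%:R.
Proof.
rewrite mderivX mnm1E mevalZ eq_sym; have [->|_] := eqVneq i j; last by rewrite mul0r.
have -> : (U_(j) - U_(j))%MM = 0%MM by apply/mnmP => k; rewrite mnmBE mnm0E subnn.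
by rewrite mpolyX0 meval1 mulr1.
Qed.

Lemma meval_dhomogZ d p c v :
  p \is d.-homog -> p.@[fun i => c * v i] = c ^+ d * p.@[v].
Proof.
move=> hp; rewrite !mevalE big_distrr /= !big_seq; apply: eq_bigr => m hm.
under eq_bigr do rewrite exprMn.
by rewrite big_split /= prodrXr -mdegE (dhomog_mf hp hm) mulrCA.
Qed.

Lemma meval_dhomog0 d p : p \is d.+1.-homog -> p.@[fun _ => 0] = 0.
Proof.
move=> hp; have := meval_dhomogZ 0 (fun _ => 0) hp.
by rewrite exprS !mul0r.
Qed.

Lemma mderiv_dhomog d p i : p \is d.+1.-homog -> mderiv i p \is d.-homog.
Proof.
move=> hp; apply/dhomogP => m; rewrite mcoeff_msupp mcoeff_deriv.
rewrite mulrn_eq0 negb_or => /andP [_ hm].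
have /(dhomog_mf hp) : (m + U_(i))%MM \in msupp p by rewrite mcoeff_msupp.
by rewrite /= mdegD mdeg1 addn1 => -[].
Qed.

Lemma meval_zero_mcoeff0 p : p.@[fun _ => 0] = p@_0.
Proof.
elim/mpoly_alg_ind: p => [c|i|p q hp hq|p q hp hq].
- by rewrite mevalC mcoeffC eqxx mulr1.
- rewrite mevalXU mcoeffX; case: eqP => // h.
  by have := congr1 (fun m : 'X_{1..n} => m i) h; rewrite mnm1E eqxx mnm0E.
- by rewrite mevalD mcoeffD hp hq.
- by rewrite mevalM hp hq (mcoeff0_is_multiplicative n K).1.
Qed.

Definition mline x w p : {poly K} := mmap (@polyC K) (fun i => (x i)%:P + w i *: 'X) p.

Lemma mlineC x w c : mline x w c%:MP = c%:P.
Proof. exact: mmapC. Qed.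

Lemma mlineX x w i : mline x w 'X_i = (x i)%:P + w i *: 'X.
Proof. by rewrite /mline mmapX mmap1U. Qed.

Lemma mlineD x w p q : mline x w (p + q) = mline x w p + mline x w q.
Proof. exact: mmapD. Qed.

Lemma mlineM x w p q : mline x w (p * q) = mline x w p * mline x w q.
Proof. exact: rmorphM. Qed.

Lemma horner_mline x w p mu : (mline x w p).[mu] = p.@[fun i => x i + mu * w i].
Proof.
elim/mpoly_alg_ind: p => [c|i|p q hp hq|p q hp hq].
- by rewrite mlineC hornerC mevalC.
- by rewrite mlineX mevalXU hornerD hornerC hornerZ hornerX mulrC.
- by rewrite mlineD hornerD hp hq mevalD.
- by rewrite mlineM hornerM hp hq mevalM.
Qed.

Lemma coef0_mline x w p : (mline x w p)`_0 = p.@[x].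
Proof.
by rewrite -horner_coef0 horner_mline; apply: meval_eq => i; rewrite mul0r addr0.
Qed.

Lemma derivation_mevalE x (D : {mpoly K[n]} -> K) :
  (forall p q, D (p + q) = D p + D q) ->
  (forall p q, D (p * q) = D p * q.@[x] + p.@[x] * D q) ->
  (forall c, D c%:MP = 0) ->
  forall p, D p = \sum_i (mderiv i p).@[x] * D 'X_i.
Proof.
move=> hD hM hC; elim/mpoly_alg_ind => [c|j|p q hp hq|p q hp hq].
- by rewrite hC big1 // => i _; rewrite mderivC meval0 mul0r.
- rewrite (bigD1 j) //= meval_mderivX eqxx mul1r big1 ?addr0 // => i /negbTE hij.
  by rewrite meval_mderivX hij mul0r.
- rewrite hD hp hq -big_split; apply: eq_bigr => i _.
  by rewrite mderivD mevalD mulrDl.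
- rewrite hM hp hq big_distrl big_distrr -big_split /=; apply: eq_bigr => i _.
  by rewrite mderivM mevalD !mevalM; ring.
Qed.

Lemma coef1_mline x w p : (mline x w p)`_1 = \sum_i (mderiv i p).@[x] * w i.
Proof.
rewrite (@derivation_mevalE x (fun q => (mline x w q)`_1)).
- by apply: eq_bigr => i _; rewrite mlineX coefD coefC coefZ coefX mulr1 add0r.
- by move=> q r; rewrite mlineD coefD.
- move=> q r; rewrite mlineM coefM !big_ord_recr big_ord0 /= add0r.
  by rewrite !coef0_mline addrC mulrC.
- by move=> c; rewrite mlineC coefC.
Qed.

Lemma size_mline_dhomog d x w p : p \is d.-homog -> (size (mline x w p) <= d.+1)%N.
Proof.
move=> hp; apply: leq_trans (size_sum _ _ _) _; apply/bigmax_leqP_seq => m hm _.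
rewrite mul_polyC; apply: leq_trans (size_scale_leq _ _) _.
rewrite -(dhomog_mf hp hm) /= mdegE; apply: size_prod_linear_exp_leq => i.
apply: leq_trans (size_polyD _ _) _; rewrite geq_max (leq_trans (size_polyC_leq1 _)) //=.
by apply: leq_trans (size_scale_leq _ _) _; rewrite size_polyX.
Qed.

Lemma meval_mderiv_vanish p i :
  (forall v, p.@[v] = 0) -> forall v, (mderiv i p).@[v] = 0.
Proof.
move=> p0 v; pose e j : K := (i == j)%:R.
have ml0 : mline v e p = 0.
  by apply: poly_eq0_vanish_off0 => mu _; rewrite horner_mline p0.
have := coef1_mline v e p; rewrite ml0 coef0 (bigD1 i) //= big1 => [|j /negbTE nij].
  by rewrite /e eqxx mulr1 addr0.
by rewrite /e eq_sym nij mulr0.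
Qed.

Lemma mpoly_vanish_eq0 p : (forall v, p.@[v] = 0) -> p = 0.
Proof.
move=> p0; apply/mpolyP => m; rewrite mcoeff0.
have dm0 v : (mderivm m p).@[v] = 0.
  rewrite /mderivm; elim: (enum 'I_n) v => [|i s IH] //= v.
  by elim: (m i) v => [|k IHk] //= v; apply: meval_mderiv_vanish.
have fact_neq0 : (\prod_(i < n) m i ^_ m i != 0)%N.
  by rewrite -lt0n prodn_gt0 // => i; rewrite ffactnn fact_gt0.
move/eqP: (dm0 (fun _ => 0)); rewrite meval_zero_mcoeff0 mcoeff_mderivm addm0.
by rewrite mulrn_eq0 (negbTE fact_neq0) => /eqP.
Qed.

Lemma exists_meval_neq0 p : p != 0 -> exists v, p.@[v] != 0.
Proof.
move=> /eqP nz_p; apply: NNPP => hp; apply: nz_p; apply: mpoly_vanish_eq0 => v.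
by apply/eqP; apply: contra_notT hp => hv; exists v.
Qed.

Lemma exists_coord_neq0 d p v : p \is d.+1.-homog -> p.@[v] != 0 -> exists i, v i != 0.
Proof.
move=> hp; have [i vi|v0] := pickP (fun i => v i != 0); first by exists i.
rewrite -(meval_dhomog0 hp) (@meval_eq _ _ v (fun _ => 0)) ?eqxx // => i.
by apply/eqP; rewrite -[_ == _]negbK v0.
Qed.

(* [mu |-> F(w + mu x)] is, up to the factor [mu^3], the reversal of
   [nu |-> F(x + nu w)], which has no terms of degree [< 2] at a singular
   point [x]; hence it is affine in [mu]. *)
Lemma meval_add_sing_cubic (F : {mpoly K[n]}) x w :
  F \is 3.-homog -> F.@[x] = 0 -> (forall i, (mderiv i F).@[x] = 0) ->
  F.@[fun i => x i + w i] = F.@[w] + \sum_i (mderiv i F).@[w] * x i.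
Proof.
move=> hF Fx0 dFx0; set phi := mline x w F; set g := mline w x F.
have phi0 : phi`_0 = 0 by rewrite coef0_mline.
have phi1 : phi`_1 = 0 by rewrite coef1_mline big1 // => i _; rewrite dFx0 mul0r.
have phiE nu : phi.[nu] = phi`_2 * nu ^+ 2 + phi`_3 * nu ^+ 3.
  rewrite (horner_coef_wide _ (size_mline_dhomog x w hF)).
  by rewrite !big_ord_recr big_ord0 /= phi0 phi1 !mul0r !add0r.
have gE : g = (phi`_3)%:P + phi`_2 *: 'X.
  apply/eqP; rewrite -subr_eq0; apply/eqP/poly_eq0_vanish_off0 => mu mu_neq0.
  rewrite hornerD hornerN hornerD hornerC hornerZ hornerX.
  have -> : g.[mu] = mu ^+ 3 * phi.[mu^-1].
    rewrite !horner_mline -(meval_dhomogZ _ _ hF); apply: meval_eq => i /=.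
    by rewrite mulrDr mulrA mulfV // mul1r addrC.
  rewrite phiE; field.
  by rewrite mu_neq0.
have := coef0_mline w x F; have := coef1_mline w x F; rewrite -/g gE.
rewrite !coefD !coefC !coefZ !coefX mulr0 mulr1 add0r addr0 => <- <-.
have -> : F.@[fun i => x i + w i] = g.[1].
  by rewrite horner_mline; apply: meval_eq => i; rewrite mul1r addrC.
by rewrite gE hornerD hornerC hornerZ hornerX mulr1.
Qed.

Definition line_closed p := forall z1 z2 mu,
  p.@[z1] = 0 -> p.@[z2] = 0 -> p.@[fun i => z1 i + mu * (z2 i - z1 i)] = 0.

(* If [p q] vanishes on the set but [p z1 != 0] and [q z2 != 0], then [p q g]
   restricted to the line through [z1] and [z2] is a nonzero polynomial, and
   any of its non-roots is a point of the set where [p q] does not vanish. *)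
Lemma irreducible_loc_closed (A : seq {mpoly K[n]}) g :
  {in A, forall f, line_closed f} -> (exists z, loc_closed A [:: g] z) ->
  irreducible_set (loc_closed A [:: g]).
Proof.
move=> A_closed Z_neq0; split => // p q pqZ.
apply: NNPP => /not_or_and [/not_all_ex_not [z1 +] /not_all_ex_not [z2 +]].
move=> h1 h2; have [Zz1 /eqP pz1] := imply_to_and _ _ h1.
have [Zz2 /eqP qz2] := imply_to_and _ _ h2.
have gz1 : g.@[z1] != 0 by case: Zz1 => _ [G]; rewrite inE => /eqP ->.
set w := fun i => z2 i - z1 i.
have [P_neq0 Q_neq0 G_neq0] :
    [/\ mline z1 w p != 0, mline z1 w q != 0 & mline z1 w g != 0].
  split; [move: pz1 | move: qz2 | move: gz1]; apply: contraNneq => ml0.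
  - by rewrite -(coef0_mline z1 w) ml0 coef0.
  - have -> : q.@[z2] = (mline z1 w q).[1].
      by rewrite horner_mline; apply: meval_eq => i; rewrite mul1r /w addrC subrK.
    by rewrite ml0 horner0.
  - by rewrite -(coef0_mline z1 w) ml0 coef0.
have [mu [_ PQG_mu]] : exists mu, mu != 0 /\ (mline z1 w (p * q * g)).[mu] != 0.
  apply: NNPP => hn; have /eqP := mulf_neq0 (mulf_neq0 P_neq0 Q_neq0) G_neq0.
  rewrite -!mlineM; apply; apply: poly_eq0_vanish_off0 => mu mu_neq0.
  by apply/eqP; apply: contra_notT hn => hmu; exists mu.
move: PQG_mu; rewrite horner_mline; set z := fun i => _ => PQGz.
have Zz : loc_closed A [:: g] z.
  split=> [f fA|]; first by apply: A_closed => //; [case: Zz1 | case: Zz2] => + _; apply.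
  by exists g; rewrite ?inE //; apply: contraNneq PQGz; rewrite mevalM => ->; rewrite mulr0.
by move: PQGz; rewrite mevalM pqZ // mul0r eqxx.
Qed.

Lemma affine_line_closed p :
  (forall z1 z2 mu, p.@[fun i => z1 i + mu * (z2 i - z1 i)] =
                    p.@[z1] + mu * (p.@[z2] - p.@[z1])) -> line_closed p.
Proof. by move=> p_aff z1 z2 mu; rewrite p_aff => -> ->; rewrite subrr mulr0 addr0. Qed.

Lemma mpolyX_line_closed i : line_closed 'X_i.
Proof. by apply: affine_line_closed => z1 z2 mu; rewrite !mevalXU. Qed.

Definition mdirderiv p c : {mpoly K[n]} := \sum_i c i *: mderiv i p.

Lemma meval_mdirderiv p c v : (mdirderiv p c).@[v] = \sum_i c i * (mderiv i p).@[v].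
Proof. by rewrite /mdirderiv (raddf_sum (meval v)); apply: eq_bigr => i _; exact: mevalZ. Qed.

Lemma mdirderiv_dhomog d p c : p \is d.+1.-homog -> mdirderiv p c \is d.-homog.
Proof. by move=> hp; apply: rpred_sum => i _; rewrite rpredZ // mderiv_dhomog. Qed.
End MpolyFacts.

Lemma sing_line_swap (K : fieldType) (F : {mpoly K[5]}) (a b : vec K 5) :
  (forall s t, sing_point F (lin_comb s t a b)) ->
  forall s t, sing_point F (lin_comb s t b a).
Proof.
move=> sing_ab s t; have -> : lin_comb s t b a = lin_comb t s a b.
  by apply: functional_extensionality => i; rewrite /lin_comb addrC.
exact: sing_ab.
Qed.

Section SingularLine.
Variables (K : numFieldType) (F : {mpoly K[5]}) (a b : vec K 5).
Hypotheses (F3 : F \is 3.-homog) (sing_ab : forall s t, sing_point F (lin_comb s t a b)).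

Lemma meval_sing_line al be v :
  F.@[fun i => al * a i + be * b i + v i] =
  al * (mdirderiv F a).@[v] + be * (mdirderiv F b).@[v] + F.@[v].
Proof.
have [F0 dF0] := sing_ab al be.
rewrite (meval_add_sing_cubic v F3 F0 dF0) !meval_mdirderiv addrC; congr (_ + _).
by rewrite !big_distrr -big_split; apply: eq_bigr => i _; rewrite /lin_comb /=; ring.
Qed.

Lemma mdirderiv_sing_line al be v :
  (mdirderiv F a).@[fun i => al * a i + be * b i + v i] = (mdirderiv F a).@[v].
Proof.
set y := fun i => _.
have ml : mline y a F = (al * (mdirderiv F a).@[v] + be * (mdirderiv F b).@[v] + F.@[v])%:P
                       + (mdirderiv F a).@[v] *: 'X.
  apply/eqP; rewrite -subr_eq0; apply/eqP/poly_eq0_vanish_off0 => mu _.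
  rewrite hornerD hornerN hornerD hornerC hornerZ hornerX horner_mline.
  have -> : F.@[fun i => y i + mu * a i] = F.@[fun i => (al + mu) * a i + be * b i + v i].
    by apply: meval_eq => i; rewrite /y; ring.
  by rewrite meval_sing_line; apply/eqP; rewrite subr_eq0; apply/eqP; ring.
have := coef1_mline y a F; rewrite ml coefD coefC coefZ coefX mulr1 add0r => ->.
by rewrite meval_mdirderiv; apply: eq_bigr => i _; rewrite mulrC.
Qed.
End SingularLine.

Section LineCoordinates.
Variables (K : numFieldType) (n : nat) (a b : 'I_n -> K) (i0 j0 : 'I_n).
Hypothesis minor_neq0 : a i0 * b j0 - a j0 * b i0 != 0.
Implicit Types (x v : 'I_n -> K).

Let minor := a i0 * b j0 - a j0 * b i0.

(* Cramer's rule on the coordinates [i0], [j0]: [resid x] vanishes there. *)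
Definition acoord x := (x i0 * b j0 - x j0 * b i0) / minor.
Definition bcoord x := (a i0 * x j0 - a j0 * x i0) / minor.
Definition resid x i := x i - acoord x * a i - bcoord x * b i.

Definition acoordP : {mpoly K[n]} := (b j0 / minor) *: 'X_i0 - (b i0 / minor) *: 'X_j0.
Definition bcoordP : {mpoly K[n]} := (a i0 / minor) *: 'X_j0 - (a j0 / minor) *: 'X_i0.
Definition residP i : {mpoly K[n]} := 'X_i - a i *: acoordP - b i *: bcoordP.

Lemma meval_acoordP x : acoordP.@[x] = acoord x.
Proof. by rewrite mevalB !mevalZ !mevalXU /acoord; ring. Qed.

Lemma meval_bcoordP x : bcoordP.@[x] = bcoord x.
Proof. by rewrite mevalB !mevalZ !mevalXU /bcoord; ring. Qed.

Lemma meval_residP x i : (residP i).@[x] = resid x i.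
Proof. by rewrite !mevalB !mevalZ mevalXU meval_acoordP meval_bcoordP /resid; ring. Qed.

Lemma mpolyX_dhomog i : ('X_i : {mpoly K[n]}) \is 1.-homog.
Proof. by rewrite dhomogX /= mdeg1. Qed.

Lemma acoordP_dhomog : acoordP \is 1.-homog.
Proof. by rewrite rpredB ?rpredZ ?mpolyX_dhomog. Qed.

Lemma bcoordP_dhomog : bcoordP \is 1.-homog.
Proof. by rewrite rpredB ?rpredZ ?mpolyX_dhomog. Qed.

Lemma residP_dhomog i : residP i \is 1.-homog.
Proof. by rewrite !rpredB ?rpredZ ?mpolyX_dhomog ?acoordP_dhomog ?bcoordP_dhomog. Qed.

Lemma line_decomp x i : x i = acoord x * a i + bcoord x * b i + resid x i.
Proof. by rewrite /resid; ring. Qed.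

Lemma resid_i0 x : resid x i0 = 0.
Proof. by rewrite /resid /acoord /bcoord /minor; field. Qed.

Lemma resid_j0 x : resid x j0 = 0.
Proof. by rewrite /resid /acoord /bcoord /minor; field. Qed.

Section OnLine.
Variables (al be : K) (v : 'I_n -> K).
Hypotheses (v_i0 : v i0 = 0) (v_j0 : v j0 = 0).
Let y := fun i => al * a i + be * b i + v i.

Lemma acoord_line : acoord y = al.
Proof. by rewrite /acoord /minor /y v_i0 v_j0; field. Qed.

Lemma bcoord_line : bcoord y = be.
Proof. by rewrite /bcoord /minor /y v_i0 v_j0; field. Qed.

Lemma resid_line i : resid y i = v i.
Proof. by rewrite /resid acoord_line bcoord_line /y; ring. Qed.
End OnLine.

Lemma bcoord_scale_shift c be x : bcoord (fun i => c * x i + be * b i) = c * bcoord x + be.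
Proof. by rewrite /bcoord /minor; field. Qed.

Lemma resid_scale_shift c be x i : resid (fun i => c * x i + be * b i) i = c * resid x i.
Proof. by rewrite /resid /acoord /bcoord /minor; field. Qed.
End LineCoordinates.

Section CylinderFromForms.
Variables (K : numFieldType) (F H D : {mpoly K[5]}) (dF e d N : nat).
Variables (A B : seq {mpoly K[N]}) (G : 'I_N.+1 -> {mpoly K[5]}) (g : 'I_5 -> {mpoly K[N.+1]}).
Variables (phi : vec K 5 -> vec K N.+1) (psi : vec K N.+1 -> vec K 5).
Hypotheses (F_homog : F \is dF.+1.-homog) (H_homog : H \is e.-homog).
Hypotheses (D_homog : D \is d.-homog) (G_homog : forall j, G j \is d.-homog).
Hypotheses (phiE : forall x j, phi x j = (G j).@[x] / D.@[x]).
Hypotheses (psiE : forall y i, psi y i = (g i).@[y]).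
Local Notation U := (open_in_compl F [:: H]).
Local Notation Y := (cyl_set (loc_closed A B)).

Lemma contains_cylinder_of_forms :
  irreducible_set (loc_closed A B) -> (forall x, U x -> D.@[x] != 0) ->
  (forall x, U x -> Y (phi x)) -> (forall y, Y y -> U (psi y)) ->
  (forall x, U x -> exists2 c, c != 0 & forall i, psi (phi x) i = c * x i) ->
  (forall y, Y y -> phi (psi y) = y) -> contains_cylinder F.
Proof.
move=> Z_irr D_neq0 phi_Y psi_U psiK phiK.
exists [:: H], N, A, B; split=> //; first by move=> H'; rewrite inE => /eqP ->; exists e.
exists phi, psi; split=> // [j x Ux|y Yy].
  by exists d, (G j), D; split; rewrite ?D_neq0 // => x' _ _; apply: phiE.
exists g, 1; split; first by rewrite meval1 oner_neq0.
  have [F_neq0 _] := psi_U y Yy.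
  have [i Fi] := exists_coord_neq0 F_homog F_neq0.
  by exists i; rewrite -psiE.
by move=> y' _ _; exists 1; rewrite ?oner_neq0 // => i; rewrite psiE mul1r.
Qed.
End CylinderFromForms.

Definition mwiden (K : numFieldType) N (p : {mpoly K[N]}) : {mpoly K[N.+1]} :=
  p \mPo [tuple 'X_(widen_ord (leqnSn N) i) | i < N].

Lemma meval_mwiden (K : numFieldType) N (p : {mpoly K[N]}) (y : vec K N.+1) :
  (mwiden p).@[y] = p.@[first_coords y].
Proof.
by rewrite comp_mpoly_meval; apply: meval_eq => i; rewrite tnth_mktuple mevalXU.
Qed.

Lemma widen_lift_max N (i : 'I_N) : widen_ord (leqnSn N) i = lift ord_max i.
Proof. by apply/val_inj; rewrite /= /bump leqNgt ltn_ord. Qed.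

Section PolarCylinder.
Variables (K : numFieldType) (F : {mpoly K[5]}) (a b : vec K 5) (i0 j0 : 'I_5).
Hypotheses (F3 : F \is 3.-homog) (sing_ab : forall s t, sing_point F (lin_comb s t a b)).
Hypothesis minor_neq0 : a i0 * b j0 - a j0 * b i0 != 0.

Local Notation La := (mdirderiv F a).
Local Notation Lb := (mdirderiv F b).
Local Notation acoord := (acoord a b i0 j0).
Local Notation bcoord := (bcoord a b i0 j0).
Local Notation resid := (resid a b i0 j0).

Let La2 : La \is 2.-homog. Proof. exact: mdirderiv_dhomog. Qed.
Let Lb2 : Lb \is 2.-homog. Proof. exact: mdirderiv_dhomog. Qed.

Let decomp x : (fun i => acoord x * a i + bcoord x * b i + resid x i) =1 x.
Proof. by move=> i; rewrite -line_decomp. Qed.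

Lemma meval_La_resid x : La.@[x] = La.@[resid x].
Proof. by rewrite -{1}(meval_eq _ (decomp x)) mdirderiv_sing_line. Qed.

Lemma meval_Lb_resid x : Lb.@[x] = Lb.@[resid x].
Proof.
rewrite -(mdirderiv_sing_line F3 (sing_line_swap sing_ab) (bcoord x) (acoord x) (resid x)).
by apply: meval_eq => i; rewrite (addrC (bcoord x * b i)) -line_decomp.
Qed.

Lemma meval_F_resid x :
  F.@[x] = acoord x * La.@[x] + bcoord x * Lb.@[x] + F.@[resid x].
Proof.
by rewrite -{1}(meval_eq _ (decomp x)) meval_sing_line // -meval_La_resid -meval_Lb_resid.
Qed.

Definition polar_num (j : 'I_6) : {mpoly K[5]} :=
  if unlift ord_max j is Some i then residP a b i0 j0 i * La else bcoordP a b i0 j0 * La.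

Definition polar_chart (x : vec K 5) : vec K 6 := fun j => (polar_num j).@[x] / F.@[x].

(* The coefficient of [a] is chosen so that, by [meval_sing_line],
   [F = La^4] and [La = La^3] on the image, which makes [polar_chart] a left
   inverse. *)
Definition polar_param (y : vec K 6) : vec K 5 :=
  let v := first_coords y in let L := La.@[v] in let tau := y ord_max in
  fun i => (L - tau * Lb.@[v] - F.@[v]) * a i + (tau * L) * b i + L * v i.

Definition polar_param_poly (i : 'I_5) : {mpoly K[6]} :=
  (mwiden La - 'X_ord_max * mwiden Lb - mwiden F) * (a i)%:MP
  + 'X_ord_max * mwiden La * (b i)%:MP + mwiden La * 'X_(widen_ord (leqnSn 5) i).

Lemma meval_polar_param_poly y i : (polar_param_poly i).@[y] = polar_param y i.
Proof. by rewrite !(mevalD, mevalN, mevalM, meval_mwiden, mevalC, mevalXU). Qed.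

Lemma polar_chart_first x i :
  first_coords (polar_chart x) i = La.@[x] / F.@[x] * resid x i.
Proof.
rewrite /first_coords /polar_chart /polar_num widen_lift_max liftK mevalM.
by rewrite meval_residP; ring.
Qed.

Lemma polar_chart_last x : polar_chart x ord_max = bcoord x * (La.@[x] / F.@[x]).
Proof. by rewrite /polar_chart /polar_num unlift_none mevalM meval_bcoordP mulrA. Qed.

Definition polar_base := loc_closed [:: 'X_i0; 'X_j0] [:: La].

Section OnCylinder.
Variable y : vec K 6.
Hypothesis Yy : cyl_set polar_base y.
Let v := first_coords y.
Let L := La.@[v].

Let v_i0 : v i0 = 0.
Proof. by case: Yy => + _ => /(_ 'X_i0); rewrite mevalXU !inE eqxx; apply. Qed.
Let v_j0 : v j0 = 0.
Proof. by case: Yy => + _ => /(_ 'X_j0); rewrite mevalXU !inE eqxx orbT; apply. Qed.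
Let L_neq0 : L != 0.
Proof. by case: Yy => _ [G]; rewrite inE => /eqP ->. Qed.

Let param_line : polar_param y = fun i =>
  (L - y ord_max * Lb.@[v] - F.@[v]) * a i + (y ord_max * L) * b i + (fun i => L * v i) i.
Proof. by []. Qed.

Lemma meval_F_polar_param : F.@[polar_param y] = L ^+ 4.
Proof.
rewrite param_line meval_sing_line // !(meval_dhomogZ _ _ La2, meval_dhomogZ _ _ Lb2).
by rewrite (meval_dhomogZ _ _ F3) -/L; ring.
Qed.

Lemma meval_La_polar_param : La.@[polar_param y] = L ^+ 3.
Proof.
by rewrite param_line mdirderiv_sing_line // (meval_dhomogZ _ _ La2) -/L exprS mulrC.
Qed.

Lemma bcoord_polar_param : bcoord (polar_param y) = y ord_max * L.
Proof. by rewrite param_line bcoord_line /= ?v_i0 ?v_j0 ?mulr0. Qed.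

Lemma resid_polar_param i : resid (polar_param y) i = L * v i.
Proof. by rewrite param_line resid_line /= ?v_i0 ?v_j0 ?mulr0. Qed.

Lemma polar_param_open : open_in_compl F [:: La] (polar_param y).
Proof.
split; first by rewrite meval_F_polar_param expf_neq0.
by exists La; rewrite ?inE // meval_La_polar_param expf_neq0.
Qed.

Lemma polar_chartK : polar_chart (polar_param y) = y.
Proof.
apply: functional_extensionality => j; case: (unliftP ord_max j) => [i ->|->].
  rewrite -widen_lift_max [LHS]polar_chart_first resid_polar_param.
  by rewrite meval_La_polar_param meval_F_polar_param /v /first_coords; field.
rewrite polar_chart_last bcoord_polar_param meval_La_polar_param meval_F_polar_param.
by field.
Qed.
End OnCylinder.

Section OnOpen.
Variable x : vec K 5.
Hypotheses (Fx : F.@[x] != 0) (Lax : La.@[x] != 0).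
Let r := La.@[x] / F.@[x].

Lemma polar_chart_base : polar_base (first_coords (polar_chart x)).
Proof.
split=> [f|]; first by rewrite !inE => /orP [] /eqP ->;
  rewrite mevalXU polar_chart_first ?resid_i0 ?resid_j0 ?mulr0.
exists La; first by rewrite inE.
rewrite (meval_eq _ (polar_chart_first x)) (meval_dhomogZ _ _ La2) -meval_La_resid.
by rewrite !mulf_neq0 ?expf_neq0 ?invr_eq0.
Qed.

Lemma polar_chart_paramK :
  exists2 c, c != 0 & forall i, polar_param (polar_chart x) i = c * x i.
Proof.
exists (r ^+ 3 * La.@[x]); first by rewrite !mulf_neq0 ?expf_neq0 ?invr_eq0.
move=> i; rewrite /polar_param !(meval_eq _ (polar_chart_first x)) -/r.
rewrite (meval_dhomogZ _ _ La2) (meval_dhomogZ _ _ Lb2) (meval_dhomogZ _ _ F3).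
rewrite -meval_La_resid -meval_Lb_resid polar_chart_first polar_chart_last -/r.
have -> : F.@[resid x] = F.@[x] - acoord x * La.@[x] - bcoord x * Lb.@[x].
  by rewrite [F.@[x]]meval_F_resid; ring.
by rewrite [x i](line_decomp a b i0 j0) /r; field.
Qed.
End OnOpen.

Lemma contains_cylinder_polar : (exists x, La.@[x] != 0) -> contains_cylinder F.
Proof.
move=> [x Lax]; apply: (@contains_cylinder_of_forms _ F La F 2 2 3 5 [:: 'X_i0; 'X_j0] [:: La]
  polar_num polar_param_poly polar_chart polar_param) => //.
- move=> j; rewrite /polar_num; case: unlift => [i|].
    exact: (dhomogM (residP_dhomog _ _ _ _ i) La2).
  exact: (dhomogM (bcoordP_dhomog _ _ _ _) La2).
- by move=> y i; rewrite meval_polar_param_poly.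
- apply: irreducible_loc_closed; first by move=> f; rewrite !inE => /orP [] /eqP ->;
    apply: mpolyX_line_closed.
  exists (resid x); split=> [f|]; first by rewrite !inE => /orP [] /eqP ->;
    rewrite mevalXU ?resid_i0 ?resid_j0.
  by exists La; rewrite ?inE // -meval_La_resid.
- by move=> x' [].
- by move=> x' [Fx' [G]]; rewrite inE => /eqP ->; apply: polar_chart_base.
- exact: polar_param_open.
- by move=> x' [Fx' [G]]; rewrite inE => /eqP ->; apply: polar_chart_paramK.
- exact: polar_chartK.
Qed.
End PolarCylinder.

Section ConeCylinder.
Variables (K : numFieldType) (F : {mpoly K[5]}) (a b : vec K 5) (i0 j0 k : 'I_5).
Hypotheses (F3 : F \is 3.-homog) (sing_ab : forall s t, sing_point F (lin_comb s t a b)).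
Hypothesis minor_neq0 : a i0 * b j0 - a j0 * b i0 != 0.
Hypotheses (La0 : forall x, (mdirderiv F a).@[x] = 0) (Lb0 : forall x, (mdirderiv F b).@[x] = 0).

Local Notation acoord := (acoord a b i0 j0).
Local Notation bcoord := (bcoord a b i0 j0).
Local Notation resid := (resid a b i0 j0).
Local Notation T := (bcoordP a b i0 j0).
Local Notation Wk := (residP a b i0 j0 k).

Lemma meval_F_cone al be v : F.@[fun i => al * a i + be * b i + v i] = F.@[v].
Proof. by rewrite meval_sing_line // La0 Lb0 !mulr0 !add0r. Qed.

Lemma meval_F_resid_cone x : F.@[resid x] = F.@[x].
Proof.
rewrite -[RHS](meval_eq F (fun i => esym (line_decomp a b i0 j0 x i))).
by rewrite meval_F_cone.
Qed.

Lemma meval_F_translate_b x be : F.@[fun i => x i + be * b i] = F.@[x].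
Proof.
have shift i : acoord x * a i + (bcoord x + be) * b i + resid x i = x i + be * b i.
  by rewrite (line_decomp a b i0 j0 x i); ring.
by rewrite -(meval_eq _ shift) meval_F_cone meval_F_resid_cone.
Qed.

Definition cone_num (j : 'I_6) : {mpoly K[5]} :=
  if unlift ord_max j is Some i then 'X_i - b i *: T else T.

Definition cone_chart (x : vec K 5) : vec K 6 := fun j => (cone_num j).@[x] / Wk.@[x].

Definition cone_param (y : vec K 6) : vec K 5 :=
  fun i => first_coords y i + y ord_max * b i.

Definition cone_param_poly (i : 'I_5) : {mpoly K[6]} :=
  'X_(widen_ord (leqnSn 5) i) + 'X_ord_max * (b i)%:MP.

Lemma meval_cone_param_poly y i : (cone_param_poly i).@[y] = cone_param y i.
Proof. by rewrite mevalD mevalM !mevalXU mevalC. Qed.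

Lemma cone_chart_first x i :
  first_coords (cone_chart x) i = (resid x k)^-1 * x i + (- (bcoord x / resid x k)) * b i.
Proof.
rewrite /first_coords /cone_chart /cone_num widen_lift_max liftK mevalB mevalZ mevalXU.
by rewrite meval_bcoordP meval_residP; ring.
Qed.

Lemma cone_chart_last x : cone_chart x ord_max = bcoord x / resid x k.
Proof. by rewrite /cone_chart /cone_num unlift_none meval_bcoordP meval_residP. Qed.

Definition cone_base := loc_closed [:: T; Wk - 1] [:: F].

Lemma meval_Wk_sub1 x : (Wk - 1).@[x] = resid x k - 1.
Proof. by rewrite mevalB meval1 meval_residP. Qed.

Lemma cone_chart_base x : F.@[x] != 0 -> resid x k != 0 ->
  cone_base (first_coords (cone_chart x)).
Proof.
move=> Fx wx; have chartE := meval_eq _ (cone_chart_first x).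
split=> [f|]; first rewrite !inE => /orP [] /eqP ->.
- by rewrite chartE meval_bcoordP bcoord_scale_shift // mulrC subrr.
- by rewrite chartE meval_Wk_sub1 resid_scale_shift //; field.
exists F; first by rewrite inE.
rewrite chartE (meval_F_translate_b (fun i => (resid x k)^-1 * x i)) (meval_dhomogZ _ _ F3).
by rewrite mulf_neq0 ?expf_neq0 ?invr_eq0.
Qed.

Section OnCylinder.
Variable y : vec K 6.
Hypothesis Yy : cyl_set cone_base y.
Let z := first_coords y.

Let bcoord_z : bcoord z = 0.
Proof. by case: Yy => + _ => /(_ T); rewrite meval_bcoordP !inE eqxx; apply. Qed.
Let resid_z : resid z k = 1.
Proof.
case: Yy => + _ => /(_ (Wk - 1)); rewrite meval_Wk_sub1 !inE eqxx orbT.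
by move=> /(_ isT) /eqP; rewrite subr_eq0 => /eqP.
Qed.

Let param_shift : cone_param y = fun i => 1 * z i + y ord_max * b i.
Proof. by apply: functional_extensionality => i; rewrite mul1r. Qed.

Lemma bcoord_cone_param : bcoord (cone_param y) = y ord_max.
Proof. by rewrite param_shift bcoord_scale_shift // bcoord_z mulr0 add0r. Qed.

Lemma resid_cone_param : resid (cone_param y) k = 1.
Proof. by rewrite param_shift resid_scale_shift // resid_z mulr1. Qed.

Lemma cone_param_open : open_in_compl F [:: Wk] (cone_param y).
Proof.
split; first by rewrite meval_F_translate_b; case: Yy => _ [G]; rewrite inE => /eqP ->.
by exists Wk; rewrite ?inE // meval_residP resid_cone_param oner_neq0.
Qed.

Lemma cone_chartK : cone_chart (cone_param y) = y.
Proof.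
apply: functional_extensionality => j; case: (unliftP ord_max j) => [i ->|->].
  rewrite -widen_lift_max [LHS]cone_chart_first resid_cone_param bcoord_cone_param.
  by rewrite /cone_param /first_coords; field.
by rewrite cone_chart_last resid_cone_param bcoord_cone_param divr1.
Qed.
End OnCylinder.

Lemma contains_cylinder_cone_at :
  (exists2 x, F.@[x] != 0 & resid x k != 0) -> contains_cylinder F.
Proof.
move=> [x Fx wx]; apply: (@contains_cylinder_of_forms _ F Wk Wk 2 1 1 5 [:: T; Wk - 1] [:: F]
  cone_num cone_param_poly cone_chart cone_param) => //.
- exact: residP_dhomog.
- exact: residP_dhomog.
- move=> j; rewrite /cone_num; case: unlift => [i|]; last exact: bcoordP_dhomog.
  by rewrite rpredB ?rpredZ ?mpolyX_dhomog ?bcoordP_dhomog.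
- by move=> y i; rewrite meval_cone_param_poly.
- apply: irreducible_loc_closed; last by exists (first_coords (cone_chart x)); apply: cone_chart_base.
  move=> f; rewrite !inE => /orP [] /eqP ->; apply: affine_line_closed => z1 z2 mu.
    by rewrite !meval_bcoordP /bcoord; ring.
  by rewrite !meval_Wk_sub1 /resid /acoord /bcoord; ring.
- by move=> x' [_ [G]]; rewrite inE => /eqP ->.
- move=> x' [Fx' [G]]; rewrite inE => /eqP ->; rewrite meval_residP.
  exact: cone_chart_base.
- exact: cone_param_open.
- move=> x' [_ [G]]; rewrite inE => /eqP ->; rewrite meval_residP => wx'.
  exists (resid x' k)^-1; first by rewrite invr_eq0.
  by move=> i; rewrite /cone_param cone_chart_first cone_chart_last; field.
- exact: cone_chartK.
Qed.
End ConeCylinder.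

Lemma lin_indep2_minor (K : fieldType) (a b : vec K 5) :
  lin_indep2 a b -> exists i0 j0, a i0 * b j0 - a j0 * b i0 != 0.
Proof.
move=> indep; pose minor (ij : 'I_5 * 'I_5) := a ij.1 * b ij.2 - a ij.2 * b ij.1.
have [[i0 j0] minor_neq0|minor0] := pickP (fun ij => minor ij != 0).
  by exists i0, j0.
have {}minor0 i j : a i * b j = a j * b i.
  by apply/eqP; rewrite -subr_eq0; move/negbFE: (minor0 (i, j)).
exfalso; have [p ap_neq0|a0] := pickP (fun p => a p != 0).
  have [_ /eqP] : b p = 0 /\ - a p = 0.
    by apply: indep => i; rewrite /lin_comb mulNr mulrC minor0 subrr.
  by rewrite oppr_eq0 (negbTE ap_neq0).
have [/eqP] : (1 : K) = 0 /\ (0 : K) = 0.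
  by apply: indep => i; rewrite /lin_comb mul1r mul0r addr0; apply/eqP/negbFE/a0.
by rewrite oner_eq0.
Qed.

Lemma contains_cylinder_cone (K : numFieldType) (F : {mpoly K[5]}) (a b : vec K 5) (i0 j0 : 'I_5) :
  F \is 3.-homog -> (forall s t, sing_point F (lin_comb s t a b)) ->
  a i0 * b j0 - a j0 * b i0 != 0 ->
  (forall x, (mdirderiv F a).@[x] = 0) -> (forall x, (mdirderiv F b).@[x] = 0) ->
  F != 0 -> contains_cylinder F.
Proof.
move=> F3 sing_ab minor_neq0 La0 Lb0 /exists_meval_neq0 [x Fx].
have [k wxk] : exists k, resid a b i0 j0 x k != 0.
  by apply: (exists_coord_neq0 F3); rewrite (meval_F_resid_cone i0 j0 F3 sing_ab La0 Lb0).
by apply: (contains_cylinder_cone_at F3 sing_ab minor_neq0 La0 Lb0 (k := k)); exists x.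
Qed.

Theorem proposition5p1 (R : realType) (F : {mpoly R[i][5]}) (a b : vec R[i] 5) :
  cubic_form F -> line_in_sing F a b -> contains_cylinder F.
Proof.
move=> [F_neq0 F3] [indep sing_ab].
have [i0 [j0 minor_neq0]] := lin_indep2_minor indep.
have [[x Lax]|La0] := classic (exists x, (mdirderiv F a).@[x] != 0).
  by apply: (contains_cylinder_polar F3 sing_ab minor_neq0); exists x.
have [[x Lbx]|Lb0] := classic (exists x, (mdirderiv F b).@[x] != 0).
  apply: (contains_cylinder_polar F3 (sing_line_swap sing_ab) (i0 := j0) (j0 := i0)).
    by rewrite [b j0 * _]mulrC [b i0 * _]mulrC.
  by exists x.
apply: (contains_cylinder_cone F3 sing_ab minor_neq0) F_neq0 => x; apply/eqP.
  by apply: contra_notT La0; exists x.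
by apply: contra_notT Lb0; exists x.
Qed.
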